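(* Let $\mathcal{T}$ be a transition system that contains no unsafe transitions (i.e., no transition whose target location is $\mathsf{err}$), and let the ADCL-NT calculus $\leadsto_\mathsf{nt}$ be instantiated with an arbitrary acceleration technique $\mathsf{accel}$. If $\mathcal{T} \leadsto_\mathsf{nt}^* \mathsf{unsafe}$, then $\mathcal{T}$ does not terminate.
   Context: Basic setting. $\mathcal{V}$ is a countably infinite set of variables and $\mathcal{A}$ is a first-order theory over a many-sorted signature $\Sigma_\mathcal{A}$ with carrier $\mathcal{C}_\mathcal{A}$. $\mathsf{QF}(\Sigma_\mathcal{A})$ is the set of quantifier-free formulas (in negation normal form) over $\Sigma_\mathcal{A}$; $\mathsf{QF}_\land(\Sigma_\mathcal{A})$ is the set of conjunctions of literals. $\sigma \models_\mathcal{A} \eta$ means $\sigma$ is a model of $\mathcal{A}$ with carrier $\mathcal{C}_\mathcal{A}$ extended by an interpretation of the variables satisfying $\eta$; $\eta \equiv_\mathcal{A} \eta'$ means $\models_\mathcal{A} \eta \leftrightarrow \eta'$; $\bot$ is false. Fix $d \in \mathbb{N}$ and disjoint vectors $\vec{x},\vec{x}' \in \mathcal{V}^d$ of pairwise different variables. A formula $\psi$ induces the relation $\vec s \longrightarrow_\psi \vec t$ on $\mathcal{C}_\mathcal{A}^d$ iff $\psi[\vec x/\vec s, \vec x'/\vec t]$ is satisfiable. $\mathcal{L} \supseteq \{\mathsf{init},\mathsf{err}\}$ is a finite set of locations; a configuration is $\ell(\vec s)$ with $\ell \in \mathcal{L}$, $\vec s \in \mathcal{C}_\mathcal{A}^d$.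 Transitions. A transition $\tau = \ell \to \ell' [\psi]$ is a triple $(\ell,\psi,\ell')$ with $\psi \in \mathsf{QF}(\Sigma_\mathcal{A})$, $\ell \neq \mathsf{err}$, $\ell' \neq \mathsf{init}$; $\mathsf{cond}(\tau) := \psi$; it induces $\ell(\vec s) \longrightarrow_\tau \ell'(\vec t)$ iff $\vec s \longrightarrow_\psi \vec t$. $\tau$ is recursive if $\ell = \ell'$, conjunctive if $\psi \in \mathsf{QF}_\land(\Sigma_\mathcal{A})$, initial if $\ell = \mathsf{init}$, safe if $\ell' \neq \mathsf{err}$. $(\ell \to \ell'[\psi])|_{\psi'} := \ell \to \ell'[\psi']$. A transition system (TS) is a finite set $\mathcal{T}$ of transitions, with $\longrightarrow_\mathcal{T} := \bigcup_{\tau \in \mathcal{T}} \longrightarrow_\tau$. Chaining: $\mathsf{chain}(\ell_s \to \ell_t[\psi], \ell_s' \to \ell_t'[\psi']) := \ell_s \to \ell_t'[\psi_c]$ where $\psi_c := \psi[\vec x'/\vec x''] \land \psi'[\vec x/\vec x'']$ for fresh $\vec x''$ if $\ell_t = \ell_s'$ and $\psi_c := \bot$ otherwise; $\mathsf{chain}([\tau]) := \tau$, $\mathsf{chain}([\tau_1,\tau_2]::\vec\tau) := \mathsf{chain}(\mathsf{chain}(\tau_1,\tau_2)::\vec\tau)$. All notions for transitions (condition, recursive, safe, $\longrightarrow$, etc.) are lifted to non-empty finite sequences via $\mathsf{chain}$. A finite run is $\tau::\vec\tau \in \mathcal{T}^+$ with $\tau$ initial and $\mathsf{cond}(\tau::\vec\tau)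 \not\equiv_\mathcal{A} \bot$. An infinite run is $\vec\tau \in \mathcal{T}^\omega$ such that some $\sigma$ satisfies $\mathsf{cond}(\vec\tau')$ for every finite prefix $\vec\tau'$ of $\vec \tau$. $\mathcal{T}$ is terminating if no infinite run exists. Syntactic implicants. For $\sigma \models_\mathcal{A} \psi$: $\mathsf{sip}(\psi,\sigma) := \bigwedge\{\pi \text{ literal of } \psi \mid \sigma \models_\mathcal{A} \pi\}$; $\mathsf{sip}(\psi) := \{\mathsf{sip}(\psi,\sigma) \mid \sigma \models_\mathcal{A} \psi\}$; $\mathsf{sip}(\tau) := \{\tau|_\psi \mid \psi \in \mathsf{sip}(\mathsf{cond}(\tau))\}$; $\mathsf{sip}(\mathcal{T}) := \bigcup_{\tau\in\mathcal{T}} \mathsf{sip}(\tau)$. Redundancy. $\tau \sqsubseteq \tau'$ ($\tau \sqsubset \tau'$) iff $\longrightarrow_\tau \subseteq \longrightarrow_{\tau'}$ (resp. $\subset$); for a set $\mathcal{S}$ of transitions, $\tau \sqsubseteq \mathcal{S}$ ($\tau \sqsubset \mathcal{S}$) iff $\tau \sqsubseteq \tau'$ ($\tau \sqsubset \tau'$) for some $\tau' \in \mathcal{S}$. Acceleration. An acceleration technique is a function $\mathsf{accel}: \mathsf{QF}_\land(\Sigma_\mathcal{A}) \to \mathsf{QF}_\land(\Sigma_{\mathcal{A}'})$ (for some first-order theory $\mathcal{A}'$) with $\longrightarrow_\psi^+ = \longrightarrow_{\mathsf{accel}(\psi)}$; for a recursive conjunctive transition $\tau$, $\mathsf{accel}(\tau)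 := \tau|_{\mathsf{accel}(\mathsf{cond}(\tau))}$. Certificates. For a recursive $\tau = \ell \to \ell[\ldots]$, a satisfiable formula $\psi$ certifies non-termination of $\tau$, written $\psi \models^\infty_\mathcal{A} \tau$, if for every model $\sigma$ of $\psi$ there is an infinite sequence $\ell(\sigma(\vec x)) = s_1 \longrightarrow_\tau s_2 \longrightarrow_\tau \cdots$. ADCL-NT. A state is a triple $(\mathcal{S},[\tau_i]_{i=1}^k,[B_i]_{i=0}^k)$ with $\mathcal{S} \supseteq \mathcal{T}$ a TS, $\bigcup_i B_i \subseteq \mathsf{sip}(\mathcal{S})$, $[\tau_i]_{i=1}^k \in \mathsf{sip}(\mathcal{S})^*$ (the trace). A transition $\tau_{k+1}$ with $\tau_{k+1} \sqsubseteq B_k$ is blocked; $\tau_{k+1} \not\sqsubseteq B_k$ is active if $\mathsf{chain}([\tau_i]_{i=1}^{k+1})$ is initial with satisfiable condition. $\mathsf{bt}(\mathcal{S},[\tau_i]_{i=1}^k,[B_0,\ldots,B_k]) := (\mathcal{S},[\tau_i]_{i=1}^{k-1},[B_0,\ldots,B_{k-2},B_{k-1}\cup\{\tau_k\}])$. The relation $\leadsto_\mathsf{nt}$ is given by the rules ($::$ is concatenation): Init: $\mathcal{T} \leadsto_\mathsf{nt} (\mathcal{T},[],[\emptyset])$. Step: $(\mathcal{S},\vec\tau,\vec B) \leadsto_\mathsf{nt} (\mathcal{S},\vec\tau::\tau,\vec B::\emptyset)$ if $\tau \in \mathsf{sip}(\mathcal{S})$ is active. Accelerate: $(\mathcal{S},\vec\tau::\vec\tau^\circlearrowleft,\vec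 B::\vec B^\circlearrowleft) \leadsto_\mathsf{nt} (\mathcal{S}\cup\{\tau\},\vec\tau::\tau,\vec B::\{\tau\})$ if $\vec\tau^\circlearrowleft$ is recursive, $|\vec\tau^\circlearrowleft| = |\vec B^\circlearrowleft|$, and $\tau = \mathsf{accel}(\vec\tau^\circlearrowleft) \not\sqsubseteq \mathsf{sip}(\mathcal{S})$. Covered: $s = (\mathcal{S},\vec\tau::\vec\tau^\circlearrowleft,\vec B) \leadsto_\mathsf{nt} \mathsf{bt}(s)$ if $\vec\tau^\circlearrowleft$ is recursive and ($\vec\tau^\circlearrowleft \sqsubset \mathsf{sip}(\mathcal{S})$, or $\vec\tau^\circlearrowleft \sqsubseteq \mathsf{sip}(\mathcal{S})$ and $|\vec\tau^\circlearrowleft| > 1$). Backtrack: $s = (\mathcal{S},\vec\tau::\tau,\vec B) \leadsto_\mathsf{nt} \mathsf{bt}(s)$ if all transitions of $\mathsf{sip}(\mathcal{S})$ are inactive and $\tau$ is safe. Refute: $(\mathcal{S},\vec\tau,\vec B) \leadsto_\mathsf{nt} \mathsf{unsafe}$ if $\vec\tau$ is unsafe. Prove: $(\mathcal{S},[],[B]) \leadsto_\mathsf{nt} \mathsf{safe}$ if all transitions of $\mathsf{sip}(\mathcal{S})$ are inactive. Nonterm: $(\mathcal{S},\vec\tau::\vec\tau^\circlearrowleft,\vec B) \leadsto_\mathsf{nt} (\mathcal{S}\cup\{\tau\},\vec\tau::\vec\tau^\circlearrowleft,\vec B)$ if $\mathsf{chain}(\vec\tau^\circlearrowleft) = \ell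 \to \ell[\ldots]$, $\psi \models^\infty_\mathcal{A} \vec\tau^\circlearrowleft$, and $\tau = \ell \to \mathsf{err}[\psi] \not\sqsubseteq \mathsf{sip}(\mathcal{S})$. *)

From Stdlib Require Import List Arith PeanoNat Relations ClassicalDescription.
Import ListNotations.
Set Implicit Arguments.

(* An abstract many-sorted first-order theory A with carrier C_A.            *)
(* Variables are natural numbers (countably infinite), each with a sort;    *)
(* [fresh s n] yields a variable of sort s that is >= n (so every sort has   *)
Record theory := Theory {
  Sort : Type;
  Carrier : Type;
  sort_of : Carrier -> Sort;
  var_sort : nat -> Sort;
  fresh : Sort -> nat -> nat;
  fresh_ge : forall s n, n <= fresh s n;
  fresh_sort : forall s n, var_sort (fresh s n) = s;
  Model : Type;
  Lit : Type;
  lit_vars : Lit -> list nat;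
  lit_rename : (nat -> nat) -> Lit -> Lit;
  lit_sat : Model -> (nat -> Carrier) -> Lit -> Prop;
  lit_sat_rename : forall M (a : nat -> Carrier) f l,
      (forall v, sort_of (a v) = var_sort v) ->
      (forall v, var_sort (f v) = var_sort v) ->
      (lit_sat M a (lit_rename f l) <-> lit_sat M (fun v => a (f v)) l);
  lit_sat_coinc : forall M (a b : nat -> Carrier) l,
      (forall v, sort_of (a v) = var_sort v) ->
      (forall v, sort_of (b v) = var_sort v) ->
      (forall v, In v (lit_vars l) -> a v = b v) ->
      (lit_sat M a l <-> lit_sat M b l)
}.

Definition well_sorted (A : theory) (a : nat -> Carrier A) : Prop :=
  forall v, sort_of A (a v) = var_sort A v.

(* Quantifier-free formulas in negation normal form *)
Inductive qf (L : Type) : Type :=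
| QLit (l : L)
| QTop
| QBot
| QAnd (p q : qf L)
| QOr (p q : qf L).
Arguments QTop {L}.
Arguments QBot {L}.

Section Formulas.
Context (A : theory).

Fixpoint qsat (M : Model A) (a : nat -> Carrier A) (p : qf (Lit A)) : Prop :=
  match p with
  | QLit l => lit_sat A M a l
  | QTop => True
  | QBot => False
  | QAnd p q => qsat M a p /\ qsat M a q
  | QOr p q => qsat M a p \/ qsat M a q
  end.

Fixpoint qlits (p : qf (Lit A)) : list (Lit A) :=
  match p with
  | QLit l => [l]
  | QTop | QBot => []
  | QAnd p q | QOr p q => qlits p ++ qlits q
  end.

Fixpoint qvars (p : qf (Lit A)) : list nat :=
  match p with
  | QLit l => lit_vars A l
  | QTop | QBot => []
  | QAnd p q | QOr p q => qvars p ++ qvars q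
  end.

Fixpoint qrename (f : nat -> nat) (p : qf (Lit A)) : qf (Lit A) :=
  match p with
  | QLit l => QLit (lit_rename A f l)
  | QTop => QTop
  | QBot => QBot
  | QAnd p q => QAnd (qrename f p) (qrename f q)
  | QOr p q => QOr (qrename f p) (qrename f q)
  end.

Fixpoint conjunctive (p : qf (Lit A)) : Prop :=
  match p with
  | QLit _ | QTop => True
  | QAnd p q => conjunctive p /\ conjunctive q
  | _ => False
  end.

Definition conj_of (ls : list (Lit A)) : qf (Lit A) :=
  fold_right (fun l acc => QAnd (QLit l) acc) QTop ls.

Definition satisfiable (p : qf (Lit A)) : Prop :=
  exists M a, well_sorted A a /\ qsat M a p.

Definition sip_at (p : qf (Lit A)) (M : Model A) (a : nat -> Carrier A) : qf (Lit A) :=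
  conj_of (filter (fun l => if excluded_middle_informative (lit_sat A M a l)
                            then true else false) (qlits p)).

Definition in_sip_formula (p phi : qf (Lit A)) : Prop :=
  exists M a, well_sorted A a /\ qsat M a p /\ phi = sip_at p M a.

End Formulas.
Arguments qsat {A} M a p.
Arguments qlits {A} p.
Arguments qvars {A} p.
Arguments qrename {A} f p.
Arguments conjunctive {A} p.
Arguments conj_of {A} ls.
Arguments satisfiable {A} p.
Arguments sip_at {A} p M a.
Arguments in_sip_formula {A} p phi.

Record setting := Setting {
  th : theory;
  Loc : Type;
  init : Loc;
  err : Loc;
  xs : list nat;
  xs' : list nat
}.

Record trans (P : setting) := Trans {
  src : Loc P;
  cond : qf (Lit (th P));
  tgt : Loc P
}.
Arguments Trans {P} src cond tgt.
Arguments src {P} t.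
Arguments cond {P} t.
Arguments tgt {P} t.

Section Calculus.
Context (P : setting).
Notation C := (Carrier (th P)).
Notation form := (qf (Lit (th P))).
Notation tr := (trans P).

Definition rel (p : form) (s t : list C) : Prop :=
  exists M a, well_sorted (th P) a /\
    Forall2 (fun v c => a v = c) (xs P) s /\
    Forall2 (fun v c => a v = c) (xs' P) t /\
    qsat M a p.

Definition step (t : tr) (l : Loc P) (s : list C) (l' : Loc P) (u : list C) : Prop :=
  l = src t /\ l' = tgt t /\ rel (cond t) s u.

Definition restrict (t : tr) (p : form) : tr := Trans (src t) p (tgt t).

(* chaining, with a fixed choice of fresh variables x'' *)
Fixpoint fresh_list (n : nat) (vs : list nat) : list nat :=
  match vs with
  | [] => []
  | v :: vs => let w := fresh (th P) (var_sort (th P) v) n in w :: fresh_list (S w) vs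
  end.

Fixpoint lookup (ks ws : list nat) (v : nat) : nat :=
  match ks, ws with
  | k :: ks, w :: ws => if Nat.eqb v k then w else lookup ks ws v
  | _, _ => v
  end.

Definition chain2 (t t' : tr) : tr :=
  if excluded_middle_informative (tgt t = src t') then
    let N := S (list_max (qvars (cond t) ++ qvars (cond t') ++ xs P ++ xs' P)) in
    let xs'' := fresh_list N (xs' P) in
    Trans (src t)
      (QAnd (qrename (lookup (xs' P) xs'') (cond t))
            (qrename (lookup (xs P) xs'') (cond t')))
      (tgt t')
  else Trans (src t) QBot (tgt t').

Definition chainl (ts : list tr) : option tr :=
  match ts with
  | [] => None
  | t :: ts => Some (fold_left chain2 ts t)
  end.

Definition recursive_seq (ts : list tr) : Prop :=
  exists c, chainl ts = Some c /\ src c = tgt c.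

Definition sqsub (t t' : tr) : Prop :=
  forall l s l' u, step t l s l' u -> step t' l s l' u.
Definition sqsub_strict (t t' : tr) : Prop := sqsub t t' /\ ~ sqsub t' t.
Definition sqsub_set (t : tr) (S : tr -> Prop) : Prop := exists t', S t' /\ sqsub t t'.
Definition sqsub_strict_set (t : tr) (S : tr -> Prop) : Prop :=
  exists t', S t' /\ sqsub_strict t t'.

Definition in_sip (S : list tr) (t : tr) : Prop :=
  exists t0, In t0 S /\ exists phi, in_sip_formula (cond t0) phi /\ t = restrict t0 phi.

Definition is_accel (accel : form -> form) : Prop :=
  forall p, conjunctive p ->
    conjunctive (accel p) /\
    forall s u, rel (accel p) s u <-> clos_trans _ (rel p) s u.

Definition certifies (p : form) (t : tr) : Prop :=
  satisfiable p /\
  forall M a, well_sorted (th P) a -> qsat M a p ->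
    exists f : nat -> list C,
      f 0 = map a (xs P) /\
      forall n, step t (src t) (f n) (src t) (f (S n)).

(* blocked / active, relative to trace [ts] and blocking sets [Bs] = B_0..B_k *)
Definition active (ts : list tr) (Bs : list (list tr)) (t : tr) : Prop :=
  ~ sqsub_set t (fun t' => In t' (last Bs [])) /\
  exists c, chainl (ts ++ [t]) = Some c /\ src c = init P /\ satisfiable (cond c).

Inductive nt_state :=
| NTS (T : list tr)
| NState (S : list tr) (ts : list tr) (Bs : list (list tr))
| NUnsafe
| NSafe.

Inductive nt_step (accel : form -> form) : nt_state -> nt_state -> Prop :=
| R_init : forall T, nt_step accel (NTS T) (NState T [] [[]])
| R_step : forall S ts Bs t,
    in_sip S t -> active ts Bs t ->
    nt_step accel (NState S ts Bs) (NState S (ts ++ [t]) (Bs ++ [[]]))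
| R_accelerate : forall S ts cyc Bs Bc c t,
    length cyc = length Bc ->
    chainl cyc = Some c -> src c = tgt c ->
    conjunctive (cond c) ->
    t = restrict c (accel (cond c)) ->
    ~ sqsub_set t (in_sip S) ->
    nt_step accel (NState S (ts ++ cyc) (Bs ++ Bc)) (NState (t :: S) (ts ++ [t]) (Bs ++ [[t]]))
| R_covered : forall S ts0 t Bs0 b1 b2 pre cyc c,
    ts0 ++ [t] = pre ++ cyc ->
    chainl cyc = Some c -> src c = tgt c ->
    (sqsub_strict_set c (in_sip S) \/ (sqsub_set c (in_sip S) /\ 1 < length cyc)) ->
    nt_step accel (NState S (ts0 ++ [t]) (Bs0 ++ [b1; b2]))
                  (NState S ts0 (Bs0 ++ [t :: b1]))
| R_backtrack : forall S ts0 t Bs0 b1 b2,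
    (forall t', in_sip S t' -> ~ active (ts0 ++ [t]) (Bs0 ++ [b1; b2]) t') ->
    tgt t <> err P ->
    nt_step accel (NState S (ts0 ++ [t]) (Bs0 ++ [b1; b2]))
                  (NState S ts0 (Bs0 ++ [t :: b1]))
| R_refute : forall S ts Bs c,
    chainl ts = Some c -> tgt c = err P ->
    nt_step accel (NState S ts Bs) NUnsafe
| R_prove : forall S b,
    (forall t', in_sip S t' -> ~ active [] [b] t') ->
    nt_step accel (NState S [] [b]) NSafe
| R_nonterm : forall S ts cyc Bs c p t,
    chainl cyc = Some c -> src c = tgt c ->
    certifies p c ->
    t = Trans (src c) p (err P) ->
    ~ sqsub_set t (in_sip S) ->
    nt_step accel (NState S (ts ++ cyc) Bs) (NState (t :: S) (ts ++ cyc) Bs).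

Definition nonterminating (T : list tr) : Prop :=
  exists (tau : nat -> tr) (s : nat -> list C),
    (forall n, In (tau n) T) /\
    src (tau 0) = init P /\
    (forall n, tgt (tau n) = src (tau (S n))) /\
    (forall n, rel (cond (tau n)) (s n) (s (S n))).

End Calculus.
Arguments rel {P} p s t.
Arguments step {P} t l s l' u.
Arguments chainl {P} ts.
Arguments is_accel {P} accel.
Arguments nt_step {P} accel _ _.
Arguments nonterminating {P} T.
Arguments NTS {P} T.
Arguments NUnsafe {P}.

From Stdlib Require Import List Relations PeanoNat ClassicalEpsilon ClassicalDescription.
Import ListNotations.

(* Every transition that ADCL-NT ever adds to its transition system or puts on
   its trace is sound for T: a safe one is simulated by a non-empty sequence of
   T-steps, and one leading to err only fires from configurations where T has an
   infinite run.  This holds for T (which has no unsafe transitions) and is kept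
   by syntactic implicants (which strengthen conditions), chaining, acceleration
   (its relation is the transitive closure of a simulated one) and the Nonterm
   rule (a certificate yields an infinite sequence of simulated loop iterations).
   Moreover, every unsafe transition on the trace entered it by Step, so it ends
   a satisfiable initial prefix.  Hence when Refute fires, the chained trace is
   sound, unsafe and satisfiable from init, and T diverges from an initial
   configuration. *)

Section Divergence.
Context {X : Type} (R : relation X).

Definition diverges (x : X) : Prop :=
  exists Q : X -> Prop, Q x /\ forall y, Q y -> exists z, R y z /\ Q z.

Lemma diverges_of_plus_closed (Q : X -> Prop) :
  (forall y, Q y -> exists z, Q z /\ clos_trans X R y z) ->
  forall y, Q y -> diverges y.
Proof.
  intros HQ y Hy.
  exists (fun x => exists z, Q z /\ clos_refl_trans_1n X R x z). split.
  { exists y; split; [assumption | constructor]. }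
  intros x (z & Hz & Hxz). destruct Hxz as [|x' z' Hxx' Hx'z'].
  - destruct (HQ x Hz) as (z' & Hz' & Hxz'). apply clos_trans_t1n in Hxz'.
    destruct Hxz' as [x' Hxx'|x' z'' Hxx' Hx'z''].
    + exists x'; split; [assumption|]. exists x'; split; [assumption | constructor].
    + exists x'; split; [assumption|]. exists z''; split; [assumption|].
      apply clos_rt_rt1n, clos_t_clos_rt, clos_t1n_trans; assumption.
  - exists x'; split; [assumption|]. exists z'; split; assumption.
Qed.

Lemma diverges_step_back x y : clos_trans X R x y -> diverges y -> diverges x.
Proof.
  intros Hxy (Q & Hy & HQ).
  apply (diverges_of_plus_closed (fun z => z = x \/ Q z)); [|left; reflexivity].
  intros z [->|Hz].
  - exists y; split; [right|]; assumption.
  - destruct (HQ z Hz) as (z' & Hzz' & Hz').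
    exists z'; split; [right; assumption | apply t_step; assumption].
Qed.

Lemma diverges_infinite_path x :
  diverges x -> exists f : nat -> X, f 0 = x /\ forall n, R (f n) (f (S n)).
Proof.
  intros (Q & Hx & HQ).
  destruct (choice (fun y z : {y | Q y} => R (proj1_sig y) (proj1_sig z))) as [g Hg].
  { intros [y Hy]. destruct (HQ y Hy) as (z & Hyz & Hz). exists (exist Q z Hz). exact Hyz. }
  exists (fun n => proj1_sig (Nat.iter n g (exist Q x Hx))).
  split; [reflexivity | intro n; apply Hg].
Qed.

End Divergence.

Lemma Forall2_eq_map {U V : Type} (a : U -> V) vs cs :
  Forall2 (fun v c => a v = c) vs cs <-> cs = map a vs.
Proof.
  split.
  - induction 1; simpl; subst; reflexivity.
  - intros ->; induction vs; simpl; constructor; auto.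
Qed.

Lemma NoDup_app_disjoint {U : Type} (l l' : list U) x : NoDup (l ++ l') -> In x l -> ~ In x l'.
Proof.
  intros H Hin. apply in_split in Hin as (l1 & l2 & ->).
  rewrite <- app_assoc in H. simpl in H. apply NoDup_remove_2 in H.
  intro; apply H; apply in_or_app; right; apply in_or_app; right; assumption.
Qed.

Lemma lookup_notin ks ws v : ~ In v ks -> lookup ks ws v = v.
Proof.
  revert ws; induction ks as [|k ks IH]; intros [|w ws] H; simpl; auto.
  destruct (Nat.eqb_spec v k) as [->|_]; [exfalso; apply H; left; reflexivity|].
  apply IH; intro; apply H; right; assumption.
Qed.

Lemma map_lookup ks ws : NoDup ks -> length ks = length ws -> map (lookup ks ws) ks = ws.
Proof.
  revert ws; induction ks as [|k ks IH]; intros [|w ws] Hnd Hlen; try discriminate; auto.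
  inversion Hnd as [|? ? Hk Hks]; subst. simpl. rewrite Nat.eqb_refl. f_equal.
  rewrite <- (IH ws) at 1 by auto.
  apply map_ext_in. intros v Hv. destruct (Nat.eqb_spec v k); subst; [contradiction | reflexivity].
Qed.

Lemma map_comp_lookup_notin {U : Type} (a : nat -> U) ks ws vs :
  (forall v, In v vs -> ~ In v ks) -> map (fun v => a (lookup ks ws v)) vs = map a vs.
Proof.
  intros Hdisj. apply map_ext_in. intros v Hv. rewrite lookup_notin; auto.
Qed.

Lemma map_comp_lookup {U : Type} (a : nat -> U) ks ws :
  NoDup ks -> length ks = length ws -> map (fun v => a (lookup ks ws v)) ks = map a ws.
Proof.
  intros Hnd Hlen. rewrite <- (map_map (lookup ks ws) a), map_lookup; auto.
Qed.

Section Formulas.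
Variable A : theory.

Definition same_sorts (ks ws : list nat) : Prop :=
  Forall2 (fun v w => var_sort A v = var_sort A w) ks ws.

Lemma same_sorts_trans ks ms ws : same_sorts ks ms -> same_sorts ms ws -> same_sorts ks ws.
Proof.
  unfold same_sorts; intros H; revert ws.
  induction H; intros ws H'; inversion H'; subst; constructor; eauto.
  congruence.
Qed.

Lemma lookup_sort ks ws v : same_sorts ks ws -> var_sort A (lookup ks ws v) = var_sort A v.
Proof.
  induction 1; simpl; [reflexivity|].
  destruct (Nat.eqb_spec v x); subst; auto.
Qed.

Lemma qsat_rename M (a : nat -> Carrier A) f p :
  well_sorted A a -> (forall v, var_sort A (f v) = var_sort A v) ->
  (qsat M a (qrename f p) <-> qsat M (fun v => a (f v)) p).
Proof.
  intros Ha Hf; induction p; simpl; try tauto.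
  apply lit_sat_rename; assumption.
Qed.

(* Formulas are in negation normal form, hence monotone in the set of true literals. *)
Lemma qsat_transfer M (a : nat -> Carrier A) M' a' p :
  qsat M a p -> (forall l, In l (qlits p) -> lit_sat A M a l -> lit_sat A M' a' l) ->
  qsat M' a' p.
Proof.
  induction p; simpl; intros Hp Hlits; auto.
  - destruct Hp; split; [apply IHp1 | apply IHp2]; auto;
      intros; apply Hlits; auto using in_or_app.
  - destruct Hp; [left; apply IHp1 | right; apply IHp2]; auto;
      intros; apply Hlits; auto using in_or_app.
Qed.

Lemma qsat_conj_of M (a : nat -> Carrier A) ls :
  qsat M a (conj_of ls) -> forall l, In l ls -> lit_sat A M a l.
Proof.
  induction ls; simpl; intros H l Hl; [contradiction|].
  destruct H, Hl; subst; auto.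
Qed.

Lemma qsat_sip_at p M (a : nat -> Carrier A) M' a' :
  qsat M a p -> qsat M' a' (sip_at p M a) -> qsat M' a' p.
Proof.
  intros Hp Hsip. apply (qsat_transfer M a); [assumption|].
  intros l Hl Hsat. apply (qsat_conj_of _ _ _ Hsip).
  apply filter_In; split; [assumption|].
  destruct (excluded_middle_informative _); tauto.
Qed.

End Formulas.

Section Relations.
Variable P : setting.
Notation C := (Carrier (th P)).
Notation form := (qf (Lit (th P))).
Notation tr := (trans P).

Lemma rel_of_qsat M (a : nat -> C) p :
  well_sorted (th P) a -> qsat M a p -> rel p (map a (xs P)) (map a (xs' P)).
Proof.
  intros Ha Hp. exists M, a. repeat split; try apply Forall2_eq_map; auto.
Qed.

Lemma rel_in_sip_formula (p phi : form) s u : in_sip_formula p phi -> rel phi s u -> rel p s u.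
Proof.
  intros (M & a & _ & Hp & ->) (M' & a' & Ha' & Hs & Hu & Hsip).
  exists M', a'. repeat split; try assumption.
  apply (qsat_sip_at _ _ _ _ _ _ Hp Hsip).
Qed.

Lemma rel_of_renamed ks ws M (a : nat -> C) p :
  same_sorts (th P) ks ws -> well_sorted (th P) a -> qsat M a (qrename (lookup ks ws) p) ->
  rel p (map (fun v => a (lookup ks ws v)) (xs P)) (map (fun v => a (lookup ks ws v)) (xs' P)).
Proof.
  intros Hsorts Ha Hp. apply (qsat_rename _ _ _ (lookup ks ws)) in Hp; auto using lookup_sort.
  apply rel_of_qsat with M; [|assumption].
  intro v. rewrite Ha. apply lookup_sort; assumption.
Qed.

Lemma same_sorts_fresh_list n vs : same_sorts (th P) vs (fresh_list P n vs).
Proof.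
  revert n; induction vs as [|v vs IH]; intro n; constructor.
  - rewrite fresh_sort; reflexivity.
  - apply IH.
Qed.

Lemma chain2_src (t t' : tr) : src (chain2 t t') = src t.
Proof. unfold chain2; destruct (excluded_middle_informative _); reflexivity. Qed.

Lemma chain2_tgt (t t' : tr) : tgt (chain2 t t') = tgt t'.
Proof. unfold chain2; destruct (excluded_middle_informative _); reflexivity. Qed.

Lemma chainl_snoc_tgt (ts : list tr) t c : chainl (ts ++ [t]) = Some c -> tgt c = tgt t.
Proof.
  destruct ts as [|t0 ts]; simpl; intros H; injection H as <-; [reflexivity|].
  rewrite fold_left_app. apply chain2_tgt.
Qed.

Hypotheses (xs_NoDup : NoDup (xs P ++ xs' P))
  (xs_length : length (xs P) = length (xs' P))
  (xs_sorts : same_sorts (th P) (xs P) (xs' P)).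

(* The intermediate valuation is read off the fresh variables. *)
Lemma rel_chain2 (t t' : tr) s u :
  rel (cond (chain2 t t')) s u ->
  tgt t = src t' /\ exists m, rel (cond t) s m /\ rel (cond t') m u.
Proof.
  unfold chain2. destruct (excluded_middle_informative _) as [Hlink|_];
    [|intros (M & a & _ & _ & _ & [])].
  intros (M & a & Ha & Hs & Hu & Hp & Hp'). split; [assumption|].
  apply Forall2_eq_map in Hs, Hu; subst s u. cbn [cond] in *.
  match type of Hp with context [fresh_list P ?n (xs' P)] =>
    pose proof (same_sorts_fresh_list n (xs' P)) as Hzs;
    set (zs := fresh_list P n (xs' P)) in *
  end.
  assert (Hlen : length (xs' P) = length zs) by (eapply Forall2_length; eauto).
  apply (rel_of_renamed (xs' P) zs) in Hp; [|assumption..].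
  apply (rel_of_renamed (xs P) zs) in Hp'; [|eapply same_sorts_trans; eassumption|assumption].
  assert (Hdisj : forall v, In v (xs P) -> ~ In v (xs' P)) by eauto using NoDup_app_disjoint.
  exists (map a zs). split.
  - rewrite <- (map_comp_lookup_notin a (xs' P) zs (xs P)), <- (map_comp_lookup a (xs' P) zs);
      eauto using NoDup_app_remove_l.
  - rewrite <- (map_comp_lookup_notin a (xs P) zs (xs' P)), <- (map_comp_lookup a (xs P) zs);
      eauto using NoDup_app_remove_r; [congruence|].
    intros v Hv Hv'; eapply Hdisj; eassumption.
Qed.

End Relations.

Section Soundness.
Variable P : setting.
Notation C := (Carrier (th P)).
Notation form := (qf (Lit (th P))).
Notation tr := (trans P).

Variable T : list tr.
Hypothesis T_src_safe : forall t, In t T -> src t <> err P.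
Hypothesis T_safe : forall t, In t T -> tgt t <> err P.
Hypotheses (xs_NoDup : NoDup (xs P ++ xs' P))
  (xs_length : length (xs P) = length (xs' P))
  (xs_sorts : same_sorts (th P) (xs P) (xs' P)).
Variable accel : form -> form.
Hypothesis accel_spec : is_accel accel.

Definition config : Type := Loc P * list C.

Definition tstep (e e' : config) : Prop :=
  exists t, In t T /\ src t = fst e /\ tgt t = fst e' /\ rel (cond t) (snd e) (snd e').

Definition sound (t : tr) : Prop :=
  src t <> err P /\
  (tgt t <> err P -> forall s u, rel (cond t) s u -> clos_trans _ tstep (src t, s) (tgt t, u)) /\
  (tgt t = err P -> forall s u, rel (cond t) s u -> diverges tstep (src t, s)).

Lemma nonterminating_of_diverges s : diverges tstep (init P, s) -> nonterminating T.
Proof.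
  intros Hdiv. destruct (diverges_infinite_path _ _ Hdiv) as (f & Hf0 & Hf).
  destruct (choice (fun n t => In t T /\ src t = fst (f n) /\ tgt t = fst (f (S n)) /\
                                rel (cond t) (snd (f n)) (snd (f (S n))))) as [tau Htau];
    [exact Hf|].
  exists tau, (fun n => snd (f n)). split; [|split; [|split]].
  - intro n; apply Htau.
  - rewrite (proj1 (proj2 (Htau 0))), Hf0; reflexivity.
  - intro n; rewrite (proj1 (proj2 (proj2 (Htau n)))), (proj1 (proj2 (Htau (S n)))); reflexivity.
  - intro n; apply Htau.
Qed.

Lemma sound_of_In t : In t T -> sound t.
Proof.
  intros Hin. split; [auto|split].
  - intros _ s u Hr. apply t_step. exists t; auto.
  - intros Herr; exfalso; apply (T_safe t); assumption.
Qed.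

Lemma sound_in_sip S t : Forall sound S -> in_sip S t -> sound t.
Proof.
  intros HS (t0 & Hin & phi & Hphi & ->).
  destruct (proj1 (Forall_forall _ _) HS t0 Hin) as (Hsrc & Hsafe & Hunsafe).
  split; [|split]; intros; eauto using rel_in_sip_formula.
Qed.

Lemma sound_chain2 t t' : sound t -> sound t' -> sound (chain2 t t').
Proof.
  intros (Hsrc & Hsafe & Hunsafe) (Hsrc' & Hsafe' & Hunsafe').
  unfold sound; rewrite chain2_src, chain2_tgt.
  split; [assumption|split]; intros Htgt s u Hr;
    destruct (rel_chain2 _ xs_NoDup xs_length xs_sorts _ _ _ _ Hr) as (Hlink & m & Hr1 & Hr2);
    assert (tgt t <> err P) by congruence.
  - apply t_trans with (tgt t, m); auto. rewrite Hlink; auto.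
  - apply diverges_step_back with (tgt t, m); auto. rewrite Hlink; eauto.
Qed.

Lemma sound_chainl ts c : chainl ts = Some c -> Forall sound ts -> sound c.
Proof.
  destruct ts as [|t ts]; [discriminate|]. intros Hc Hts; injection Hc as <-.
  apply Forall_cons_iff in Hts as [Ht Hts].
  revert t Ht; induction Hts as [|t' ts Ht' _ IH]; intros t Ht; simpl; auto using sound_chain2.
Qed.

Lemma sound_accelerate c :
  sound c -> src c = tgt c -> conjunctive (cond c) -> sound (restrict c (accel (cond c))).
Proof.
  intros (Hsrc & Hsafe & _) Hloop Hconj. unfold sound, restrict; simpl.
  assert (Htgt : tgt c <> err P) by congruence.
  split; [assumption | split; [|contradiction]].
  intros _ s u Hr. apply (proj2 (accel_spec _ Hconj)) in Hr.
  induction Hr as [s u Hsu|s m u _ IH1 _ IH2]; auto.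
  apply t_trans with (tgt c, m); [assumption|]. rewrite <- Hloop at 1. assumption.
Qed.

Lemma sound_certified c p :
  sound c -> src c = tgt c -> certifies p c -> sound (Trans (src c) p (err P)).
Proof.
  intros (Hsrc & Hsafe & _) Hloop (_ & Hcert). unfold sound; simpl.
  split; [assumption | split; [contradiction|]].
  intros _ s u (M & a & Ha & Hs & _ & Hp). apply Forall2_eq_map in Hs as ->.
  destruct (Hcert M a Ha Hp) as (f & Hf0 & Hf). rewrite <- Hf0.
  apply (diverges_of_plus_closed _ (fun e => exists n, e = (src c, f n))); [|eauto].
  intros e (n & ->). exists (src c, f (S n)). split; [eauto|].
  destruct (Hf n) as (_ & _ & Hr). rewrite Hloop at 2. apply Hsafe; congruence.
Qed.

Definition feasible_run (ts : list tr) : Prop :=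
  exists c, chainl ts = Some c /\ src c = init P /\ satisfiable (cond c).

Definition unsafe_steps_feasible (ts : list tr) : Prop :=
  forall pre t post, ts = pre ++ t :: post -> tgt t = err P -> feasible_run (pre ++ [t]).

Lemma unsafe_steps_feasible_app_inv ts ts' :
  unsafe_steps_feasible (ts ++ ts') -> unsafe_steps_feasible ts.
Proof.
  intros H pre t post -> Herr. apply (H pre t (post ++ ts')); [|assumption].
  rewrite <- app_assoc; reflexivity.
Qed.

Lemma unsafe_steps_feasible_snoc ts t :
  unsafe_steps_feasible ts -> (tgt t = err P -> feasible_run (ts ++ [t])) ->
  unsafe_steps_feasible (ts ++ [t]).
Proof.
  intros Hts Ht pre t' post Heq Herr.
  destruct post as [|x post _] using rev_ind.
  - apply app_inj_tail in Heq as [-> ->]. auto.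
  - rewrite app_comm_cons, app_assoc in Heq. apply app_inj_tail in Heq as [-> ->].
    eapply Hts; eauto.
Qed.

Lemma nonterminating_of_unsafe_trace ts c :
  Forall sound ts -> unsafe_steps_feasible ts -> chainl ts = Some c -> tgt c = err P ->
  nonterminating T.
Proof.
  intros Hsound Hfeas Hc Herr.
  destruct ts as [|t pre _] using rev_ind; [discriminate|].
  destruct (Hfeas pre t [] eq_refl) as (c' & Hc' & Hinit & M & a & Ha & Hsat).
  { rewrite <- (chainl_snoc_tgt _ _ _ _ Hc); assumption. }
  rewrite Hc in Hc'; injection Hc' as <-.
  destruct (sound_chainl _ _ Hc Hsound) as (_ & _ & Hunsafe).
  apply (nonterminating_of_diverges (map a (xs P))). rewrite <- Hinit.
  apply (Hunsafe Herr _ (map a (xs' P))), rel_of_qsat with M; assumption.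
Qed.

Definition invariant (st : nt_state P) : Prop :=
  match st with
  | NTS T' => T' = T
  | NState Sys ts _ => Forall sound Sys /\ Forall sound ts /\ unsafe_steps_feasible ts
  | NUnsafe => nonterminating T
  | NSafe _ => True
  end.

Lemma invariant_step st st' : nt_step accel st st' -> invariant st -> invariant st'.
Proof.
  destruct 1 as [T0|Sys ts Bs t Hsip Hactive|Sys ts cyc Bs Bc c t _ Hc Hloop Hconj -> _
                |Sys ts0 t Bs0 b1 b2 pre cyc c _ _ _ _|Sys ts0 t Bs0 b1 b2 _ _
                |Sys ts Bs c Hc Herr|Sys b _|Sys ts cyc Bs c p t Hc Hloop Hcert -> _]; simpl.
  - intros ->. split; [|split].
    + apply Forall_forall, sound_of_In.
    + constructor.
    + intros pre t post Heq. exfalso; eapply app_cons_not_nil; eauto.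
  - intros (HS & Hts & Hfeas). split; [|split]; [assumption | |].
    + apply Forall_app; split; eauto using sound_in_sip.
    + apply unsafe_steps_feasible_snoc; [assumption|]. intros _; apply Hactive.
  - intros (HS & Hts & Hfeas). apply Forall_app in Hts as [Hts Hcyc].
    assert (Hsc : sound c) by (eapply sound_chainl; eauto).
    assert (Hsrc : src c <> err P) by apply Hsc.
    split; [|split].
    + constructor; auto using sound_accelerate.
    + apply Forall_app; auto using sound_accelerate.
    + apply unsafe_steps_feasible_snoc; [eapply unsafe_steps_feasible_app_inv; eauto|].
      simpl; congruence.
  - intros (HS & Hts & Hfeas). apply Forall_app in Hts as [Hts _].
    eauto using unsafe_steps_feasible_app_inv.
  - intros (HS & Hts & Hfeas). apply Forall_app in Hts as [Hts _].
    eauto using unsafe_steps_feasible_app_inv.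
  - intros (_ & Hts & Hfeas). eapply nonterminating_of_unsafe_trace; eauto.
  - trivial.
  - intros (HS & Hts & Hfeas).
    assert (Hcyc : Forall sound cyc) by (apply Forall_app in Hts; apply Hts).
    split; [|split]; auto.
    constructor; [|assumption]. apply sound_certified; eauto using sound_chainl.
Qed.

Lemma invariant_steps st st' :
  clos_refl_trans _ (nt_step accel) st st' -> invariant st -> invariant st'.
Proof. induction 1; eauto using invariant_step. Qed.

End Soundness.

Theorem theorem2 (P : setting) (accel : qf (Lit (th P)) -> qf (Lit (th P)))
  (T : list (trans P)) :
  init P <> err P ->
  (exists locs : list (Loc P), forall l, In l locs) ->
  NoDup (xs P ++ xs' P) ->
  length (xs P) = length (xs' P) ->
  Forall2 (fun v w => var_sort (th P) v = var_sort (th P) w) (xs P) (xs' P) ->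
  is_accel accel ->
  (forall t, In t T -> src t <> err P /\ tgt t <> init P) ->
  (forall t, In t T -> tgt t <> err P) ->
  clos_refl_trans _ (nt_step accel) (NTS T) NUnsafe ->
  nonterminating T.
Proof.
  intros _ _ Hnd Hlen Hsorts Hacc HT HT' Hrun.
  apply (invariant_steps P T) in Hrun; auto.
  - intros t Ht; apply HT; assumption.
  - reflexivity.
Qed.
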